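(* Let $A$ be a parametric timed B\''uchi automaton, $\alpha$ an abstraction over its symbolic semantics $[\![A]\!]$, and $s$ a state of the induced system $[\![A]\!]^\alpha$. Then for every state $s'$ reachable from $s$ in $[\![A]\!]^\alpha$ (via $\Longrightarrow^\alpha$) we have $s'.[\![C]\!]\subseteq s.[\![C]\!]$.
   Context: Parameters and guards. $P$ is a finite set of parameters; an affine expression is $z_0+z_1p_1+\dots+z_np_n$ with $p_i\in P$, $z_i\in\mathbb Z$; $E(P)$ is the set of these. A parameter valuation is $v:P\to\mathbb Z$. Bounds $lb,ub:P\to\mathbb Z$ are fixed. $X$ is a finite set of clocks containing a zero clock $x_0$. A guard is a finite conjunction of $x_i-x_j\sim e$ with $e\in E(P)$, $\sim\in\{\le,<\}$; it is simple if always $x_i=x_0$ or $x_j=x_0$. Clock valuations $\eta:X\to\mathbb R_{\ge0}$ have $\eta(x_0)=0$; $\eta+d$ delays all clocks but $x_0$ by $d$, $\eta\langle R\rangle$ resets the clocks in $R$. A PTA is $M=(L,l_0,X,P,\Delta,Inv)$ with $\Delta\subseteq L\times(\text{simple guards})\times2^X\times L$ and $Inv$ assigning simple guards to locations; its concrete semantics $[\![M]\!]_v$ has states $(l,\eta)$, initial state $(l_0,\mathbf 0)$, delay transitions $(l,\eta)\xrightarrow{d}(l,\eta+d)$ when $(v,\eta+d)\models Inv(l)$ and action transitions $(l,\eta)\xrightarrow{act}(l',\eta\langle R\rangle)$ when $(l,g,R,l')\in\Delta$, $(v,\eta)\models g$, $(v,\eta\langle R\rangle)\models Inv(l')$. A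 PTBA is $A=(M,F)$, $F\subseteq L$. A constraint is $e\sim e'$ ($e,e'\in E(P)$, $\sim\in\{<,\le,\ge,>\}$), a constraint set $C$ a finite set of them, $[\![C]\!]$ the set of valuations satisfying all of them, $C\models c$ iff $[\![C]\!]\subseteq[\![c]\!]$. A PDBM $D$ has for all $0\le i,j\le|X|$ an entry $D_{ij}: x_i-x_j\prec_{ij}e_{ij}$ ($\prec_{ij}\in\{\le,<\}$, $e_{ij}\in E(P)\cup\{\infty\}$, $e_{ii}=0$). A CPDBM is $(C,D)$ with $C\models e_{0i}\ge0$ for all $i$; $[\![C,D]\!]=\{(v,\eta):v\in[\![C]\!],\eta\text{ satisfies all }D_{ij}\text{ under }v\}$. Identify $\le$ with true and $<$ with false. Reset: $(C,D)\langle x_r\rangle=(C,D')$ with $D'_{rj}=D_{0j}$ ($j\neq r$), $D'_{ir}=D_{i0}$ ($i\neq r$), others unchanged (sets of clocks: sequentially). Time successor: $D^\uparrow_{i0}=(\infty,<)$ for $i\ne0$, others unchanged. Guard application of $g:x_i-x_j\prec e$ with $c$ the constraint $e_{ij}(\prec_{ij}\Rightarrow\prec)e$: $(C,D)[g]$ equals $\{(C,D[g])\}$ if $C\models\neg c$, $\{(C,D)\}$ if $C\models c$, and $\{(C\cup\{c\},D),(C\cup\{\neg c\},D[g])\}$ otherwise, where $D[g]$ sets entry $ij$ to $(e,\prec)$; conjunctions are applied sequentially. Canonisation $(C,D)_c$: all results of the nondeterministic Floyd–Warshall procedure that for $k,i,j$ ranging in order over $0..|X|$ replaces the current $(C,D)$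 by an element of $(C,D)[x_i-x_j(\prec_{ik}\wedge\prec_{kj})e_{ik}+e_{kj}]$. Symbolic semantics $[\![A]\!]$: states $(l,[\![C,D]\!])$; for such $s$, $s.[\![C]\!]$ denotes $[\![C]\!]$. Initial states $(l_0,[\![C,D]\!])$ for $(C,D)\in(C_0,E^\uparrow)[Inv(l_0)]$, $E$ with all entries $(0,\le)$, $C_0=\{lb(p)\le p,\ p\le ub(p):p\in P\}$. Transition $(l,[\![C,D]\!])\Longrightarrow(l',[\![C'_c,D'_c]\!])$ iff $(l,g,R,l')\in\Delta$, $(C'',D'')\in(C,D)[g]$, $(C''_c,D''_c)\in(C'',D'')_c$, $(C',D')\in(C''_c,D''_c\langle R\rangle^\uparrow)[Inv(l')]$, $(C'_c,D'_c)\in(C',D')_c$. Abstraction. For concrete $s=(l,\eta)$ and symbolic $S=(l',[\![C,D]\!])$, $s\in_vS$ means $l=l'$, $v\in[\![C]\!]$, $\eta\in$ the clock valuations satisfying $D$ under $v$. $\preccurlyeq$ is the largest time-abstracting simulation on $[\![M]\!]_v$ (a relation $R$ such that $s_1Rs_2$ and an action step $s_1\xrightarrow{act}s_1'$ give $s_2\xrightarrow{act}s_2'$ with $s_1'Rs_2'$, and a delay step of $s_1$ by $d_1$ is matched by a delay step of $s_2$ by some $d_2$ with related results). An abstraction over $[\![A]\!]$ is a map $\alpha$ from symbolic states to sets of symbolic states such that (i) $(l',[\![C',D']\!])\in\alpha((l,[\![C,D]\!]))$ implies $l=l'$, $[\![C']\!]\subseteq[\![C]\!]$, $[\![C',D]\!]\subseteq[\![C',D']\!]$;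 (ii) for each $v\in[\![C]\!]$ there exist $S_1$ and $S_2\in\alpha(S_1)$ such that every $s\in_vS_2$ has some $s'\in_vS_1$ with $s\preccurlyeq s'$. The induced system $[\![A]\!]^\alpha$ has states $\{S:S\in\alpha(S')\}$, initial states the images of initial states, and $Q\Longrightarrow^\alpha Q'$ iff $Q\Longrightarrow S$ and $Q'\in\alpha(S)$ for some symbolic $S$. *)

From HB Require Import structures.
From mathcomp Require Import all_boot all_order all_algebra.
From mathcomp Require Import Rstruct.
From Stdlib Require Import Relations.Relation_Operators.
From Stdlib Require Rdefinitions.
Notation R := Rdefinitions.R.
Set Implicit Arguments. Unset Strict Implicit. Unset Printing Implicit Defensive.
Import Order.TTheory GRing.Theory Num.Theory.
Local Open Scope ring_scope.

Section PTA.
Variable P : finType.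

Definition pval := P -> int.

Record aexpr := AExpr { a_const : int; a_coef : P -> int }.

Definition aeval (e : aexpr) (v : pval) : int :=
  a_const e + \sum_(p : P) a_coef e p * v p.

Definition aadd (e1 e2 : aexpr) : aexpr :=
  AExpr (a_const e1 + a_const e2) (fun p => a_coef e1 p + a_coef e2 p).
Definition aconst (z : int) : aexpr := AExpr z (fun _ => 0).
Definition aparam (p : P) : aexpr := AExpr 0 (fun q => if q == p then 1 else 0).

(* extended expressions: None stands for infinity *)
Definition xexpr := option aexpr.
Definition xadd (e1 e2 : xexpr) : xexpr :=
  match e1, e2 with Some a, Some b => Some (aadd a b) | _, _ => None end.

Inductive cmp := CLt | CLe | CGe | CGt.
Record constr := Constr { c_lhs : aexpr; c_cmp : cmp; c_rhs : aexpr }.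

Definition sat_c (v : pval) (c : constr) : Prop :=
  let a := aeval (c_lhs c) v in let b := aeval (c_rhs c) v in
  match c_cmp c with
  | CLt => (a < b)%R | CLe => (a <= b)%R | CGe => (a >= b)%R | CGt => (a > b)%R
  end.

Definition neg_cmp (k : cmp) : cmp :=
  match k with CLt => CGe | CLe => CGt | CGe => CLt | CGt => CLe end.
Definition neg_c (c : constr) : constr := Constr (c_lhs c) (neg_cmp (c_cmp c)) (c_rhs c).

Definition cset := seq constr.
Definition semC (C : cset) : pval -> Prop := fun v => forall c, List.In c C -> sat_c v c.
Definition models (C : cset) (c : constr) : Prop := forall v, semC C v -> sat_c v c.

Variable n : nat.                       (* X = {x_0, ..., x_n}, x_0 the zero clock *)
Definition clock := 'I_n.+1.
Definition x0 : clock := ord0.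

(* strictness: true = "<=", false = "<" *)
Record atom := Atom { g_i : clock; g_j : clock; g_le : bool; g_bound : aexpr }.
Definition guard := seq atom.
Definition simple_atom (a : atom) : bool := (g_i a == x0) || (g_j a == x0).
Definition simple_guard (g : guard) : bool := all simple_atom g.

Definition cval := clock -> R.
Definition valid_cval (eta : cval) : Prop := eta x0 = 0 /\ forall x, 0 <= eta x.

Definition cmp_le (le : bool) (a b : R) : Prop := if le then a <= b else a < b.

Definition sat_atom (v : pval) (eta : cval) (a : atom) : Prop :=
  cmp_le (g_le a) (eta (g_i a) - eta (g_j a)) ((aeval (g_bound a) v)%:~R).
Definition sat_guard (v : pval) (eta : cval) (g : guard) : Prop :=
  forall a, List.In a g -> sat_atom v eta a.

Definition delay (eta : cval) (d : R) : cval :=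
  fun x => if x == x0 then eta x else eta x + d.
Definition reset (eta : cval) (Rs : seq clock) : cval :=
  fun x => if x \in Rs then 0 else eta x.

Variable L : finType.

Record PTA := MkPTA {
  p_l0 : L;
  p_edges : seq (L * guard * seq clock * L);
  p_inv : L -> guard
}.
Definition wf_PTA (M : PTA) : Prop :=
  (forall e, List.In e (p_edges M) -> simple_guard e.1.1.2) /\
  (forall l, simple_guard (p_inv M l)).

Record PTBA := MkPTBA { b_M : PTA; b_F : {set L} }.

Definition cstate := (L * cval)%type.
Definition delay_step (M : PTA) (v : pval) (s : cstate) (d : R) (s' : cstate) : Prop :=
  0 <= d /\ s' = (s.1, delay s.2 d) /\ sat_guard v (delay s.2 d) (p_inv M s.1).
Definition act_step (M : PTA) (v : pval) (s s' : cstate) : Prop :=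
  exists g Rs l', List.In (s.1, g, Rs, l') (p_edges M) /\ sat_guard v s.2 g /\
    sat_guard v (reset s.2 Rs) (p_inv M l') /\ s' = (l', reset s.2 Rs).

Definition ta_simulation (M : PTA) (v : pval) (Rel : cstate -> cstate -> Prop) : Prop :=
  forall s1 s2, Rel s1 s2 ->
    (forall s1', act_step M v s1 s1' -> exists s2', act_step M v s2 s2' /\ Rel s1' s2') /\
    (forall d1 s1', delay_step M v s1 d1 s1' ->
        exists d2 s2', delay_step M v s2 d2 s2' /\ Rel s1' s2').
Definition ta_sim (M : PTA) (v : pval) (s1 s2 : cstate) : Prop :=
  exists Rel, ta_simulation M v Rel /\ Rel s1 s2.

(* entry D i j : x_i - x_j (prec) e, with (e, prec), e = None for infinity,
   prec = true for "<=", false for "<" *)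
Definition pdbm := clock -> clock -> (xexpr * bool).
Definition is_pdbm (D : pdbm) : Prop := forall i, (D i i).1 = Some (aconst 0).
Definition cpdbm (C : cset) (D : pdbm) : Prop :=
  is_pdbm D /\
  forall i, match (D x0 i).1 with
            | Some e => models C (Constr e CGe (aconst 0))
            | None => True end.

Definition sat_entry (v : pval) (eta : cval) (D : pdbm) (i j : clock) : Prop :=
  match (D i j).1 with
  | None => True
  | Some e => cmp_le (D i j).2 (eta i - eta j) ((aeval e v)%:~R)
  end.
Definition semCD (C : cset) (D : pdbm) : pval -> cval -> Prop :=
  fun v eta => semC C v /\ valid_cval eta /\ forall i j, sat_entry v eta D i j.

Definition reset1 (D : pdbm) (r : clock) : pdbm :=
  fun i j => if i == r then (if j == r then D i j else D x0 j)
             else if j == r then D i x0 else D i j.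
Definition resetD (D : pdbm) (Rs : seq clock) : pdbm := foldl reset1 D Rs.

Definition upD (D : pdbm) : pdbm :=
  fun i j => if (i != x0) && (j == x0) then (None, false) else D i j.

Definition setD (D : pdbm) (i j : clock) (b : xexpr * bool) : pdbm :=
  fun i' j' => if (i' == i) && (j' == j) then b else D i' j'.

(* guard application (C,D)[x_i - x_j prec e], as a relation "(C',D') in (C,D)[g]";
   e may be infinity (this arises in canonisation) *)
Definition gapp1 (C : cset) (D : pdbm) (i j : clock) (le : bool) (e : xexpr)
    (C' : cset) (D' : pdbm) : Prop :=
  match e with
  | None => C' = C /\ D' = D      (* tightening to infinity never changes anything *)
  | Some e =>
    let Dg := setD D i j (Some e, le) in
    match (D i j).1 with
    | None => C' = C /\ D' = Dg   (* infinity (prec) e is unsatisfiable: C |= not c *)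
    | Some eij =>
      let c := Constr eij (if ~~ (D i j).2 || le then CLe else CLt) e in
      (models C (neg_c c) /\ C' = C /\ D' = Dg) \/
      (~ models C (neg_c c) /\ models C c /\ C' = C /\ D' = D) \/
      (~ models C (neg_c c) /\ ~ models C c /\
         ((C' = c :: C /\ D' = D) \/ (C' = neg_c c :: C /\ D' = Dg)))
    end
  end.

Fixpoint gapp (C : cset) (D : pdbm) (g : guard) (C' : cset) (D' : pdbm) : Prop :=
  match g with
  | [::] => C' = C /\ D' = D
  | a :: g' => exists C1 D1,
      gapp1 C D (g_i a) (g_j a) (g_le a) (Some (g_bound a)) C1 D1 /\ gapp C1 D1 g' C' D'
  end.

(* canonisation: nondeterministic Floyd--Warshall, k outermost, then i, then j *)
Definition fw_triples : seq (clock * clock * clock) :=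
  flatten [seq flatten [seq [seq (k, i, j) | j <- enum 'I_n.+1] | i <- enum 'I_n.+1]
          | k <- enum 'I_n.+1].

Definition canon_step (C : cset) (D : pdbm) (t : clock * clock * clock)
    (C' : cset) (D' : pdbm) : Prop :=
  let: (k, i, j) := t in
  gapp1 C D i j ((D i k).2 && (D k j).2) (xadd (D i k).1 (D k j).1) C' D'.

Fixpoint canon_seq (ts : seq (clock * clock * clock)) (C : cset) (D : pdbm)
    (C' : cset) (D' : pdbm) : Prop :=
  match ts with
  | [::] => C' = C /\ D' = D
  | t :: ts' => exists C1 D1, canon_step C D t C1 D1 /\ canon_seq ts' C1 D1 C' D'
  end.

Definition canon (C : cset) (D : pdbm) (C' : cset) (D' : pdbm) : Prop :=
  canon_seq fw_triples C D C' D'.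

(* a symbolic state (l, [[C,D]]) is recorded together with s.[[C]] *)
Record sstate := SState {
  s_loc : L;
  s_C : pval -> Prop;
  s_zone : pval -> cval -> Prop
}.
Definition sym_of (l : L) (C : cset) (D : pdbm) : sstate := SState l (semC C) (semCD C D).
Definition is_sym (S : sstate) : Prop := exists l C D, S = sym_of l C D.

Variables lb ub : P -> int.
Definition C0 : cset :=
  [seq Constr (aconst (lb p)) CLe (aparam p) | p <- enum P] ++
  [seq Constr (aparam p) CLe (aconst (ub p)) | p <- enum P].
Definition E0 : pdbm := fun _ _ => (Some (aconst 0), true).

Definition sym_init (A : PTBA) (S : sstate) : Prop :=
  exists C D, gapp C0 (upD E0) (p_inv (b_M A) (p_l0 (b_M A))) C D /\
              S = sym_of (p_l0 (b_M A)) C D.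

Definition sym_step (A : PTBA) (S S' : sstate) : Prop :=
  exists l C D, S = sym_of l C D /\
  exists g Rs l', List.In (l, g, Rs, l') (p_edges (b_M A)) /\
  exists C2 D2, gapp C D g C2 D2 /\
  exists C2c D2c, canon C2 D2 C2c D2c /\
  exists C1 D1, gapp C2c (upD (resetD D2c Rs)) (p_inv (b_M A) l') C1 D1 /\
  exists C1c D1c, canon C1 D1 C1c D1c /\
  S' = sym_of l' C1c D1c.

Definition in_v (v : pval) (s : cstate) (S : sstate) : Prop :=
  s.1 = s_loc S /\ s_C S v /\ s_zone S v s.2.

Definition subset_set {T : Type} (X Y : T -> Prop) := forall x, X x -> Y x.
Definition subset_set2 {T U : Type} (X Y : T -> U -> Prop) := forall x y, X x y -> Y x y.

(* alpha S S' means S' \in alpha(S) *)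
Definition abstraction (A : PTBA) (alpha : sstate -> sstate -> Prop) : Prop :=
  (forall S S', is_sym S -> alpha S S' -> is_sym S') /\
  (forall l C D l' C' D', alpha (sym_of l C D) (sym_of l' C' D') ->
     l = l' /\ subset_set (semC C') (semC C) /\
     subset_set2 (semCD C' D) (semCD C' D')) /\
  (forall S1 S2, is_sym S1 -> alpha S1 S2 ->
     forall v, s_C S2 v ->
     forall s, in_v v s S2 -> exists s', in_v v s' S1 /\ ta_sim (b_M A) v s s').

Definition abs_state (alpha : sstate -> sstate -> Prop) (Q : sstate) : Prop :=
  exists S, is_sym S /\ alpha S Q.
Definition abs_init (A : PTBA) (alpha : sstate -> sstate -> Prop) (Q : sstate) : Prop :=
  exists S, sym_init A S /\ alpha S Q.
Definition abs_step (A : PTBA) (alpha : sstate -> sstate -> Prop) (Q Q' : sstate) : Prop :=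
  exists S, sym_step A Q S /\ alpha S Q'.

End PTA.

From Pilot Require Import Defs.
From HB Require Import structures.
From mathcomp Require Import all_boot all_order all_algebra.
From mathcomp Require Import Rstruct.
From Stdlib Require Import Relations.Relation_Operators.
From Stdlib Require List.

Set Implicit Arguments.
Unset Strict Implicit.
Unset Printing Implicit Defensive.

(* Every operation of the symbolic semantics (guard application, canonisation)
   only ever adds constraints to C, and an abstraction may only shrink [[C]];
   a symbolic step followed by abstraction therefore shrinks s.[[C]], and so
   does every finite sequence of such steps. *)

Section ConstraintGrowth.
Variables (P : finType) (n : nat).
Implicit Types (C : cset P) (D : pdbm P n).

Lemma semC_incl C C' : List.incl C C' -> subset_set (semC C') (semC C).
Proof. by move=> CC' v HC' c /CC'; apply: HC'. Qed.

Lemma gapp1_incl C D i j le e C' D' : gapp1 C D i j le e C' D' -> List.incl C C'.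
Proof.
case: e => [e|]; last by case=> -> _.
rewrite /gapp1; case: (D i j).1 => [eij|]; last by case=> -> _.
by move=> [[_ [-> _]]|[[_ [_ [-> _]]]|[_ [_ [[-> _]|[-> _]]]]]] //;
  apply: List.incl_tl; apply: List.incl_refl.
Qed.

Lemma gapp_incl (g : guard P n) C D C' D' : gapp C D g C' D' -> List.incl C C'.
Proof.
elim: g C D => [|a g IH] C D; first by case=> -> _.
case=> [C1 [D1 [HC1 HC']]].
exact: List.incl_tran (gapp1_incl HC1) (IH _ _ HC').
Qed.

Lemma canon_seq_incl ts C D C' D' : canon_seq ts C D C' D' -> List.incl C C'.
Proof.
elim: ts C D => [|[[k i] j] ts IH] C D; first by case=> -> _.
case=> [C1 [D1 [HC1 HC']]].
exact: List.incl_tran (gapp1_incl HC1) (IH _ _ HC').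
Qed.

Lemma canon_incl C D C' D' : canon C D C' D' -> List.incl C C'.
Proof. exact: canon_seq_incl. Qed.

End ConstraintGrowth.

Section InducedSystem.
Variables (P : finType) (n : nat) (L : finType).
Variables (A : PTBA P n L) (alpha : sstate P n L -> sstate P n L -> Prop).

Lemma sym_step_semC (S S' : sstate P n L) : sym_step A S S' -> subset_set (s_C S') (s_C S).
Proof.
case=> l [C [D [-> [g [Rs [l' [_ [C2 [D2 [Hg]]]]]]]]]].
case=> C2c [D2c [Hc [C1 [D1 [Hinv [C1c [D1c [Hc' ->]]]]]]]] /=.
apply: semC_incl.
apply: List.incl_tran (gapp_incl Hg) (List.incl_tran (canon_incl Hc) _).
exact: List.incl_tran (gapp_incl Hinv) (canon_incl Hc').
Qed.

Lemma sym_step_is_sym (S S' : sstate P n L) : sym_step A S S' -> Defs.is_sym S'.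
Proof.
case=> ? [? [? [_ [? [? [l' [_ [? [? [_]]]]]]]]]].
by case=> ? [? [_ [? [? [_ [C1c [D1c [_ ->]]]]]]]]; exists l', C1c, D1c.
Qed.

Hypothesis alpha_abs : abstraction A alpha.

Lemma abstraction_semC (S Q : sstate P n L) :
  Defs.is_sym S -> alpha S Q -> subset_set (s_C Q) (s_C S).
Proof.
have [alpha_sym [alpha_sub _]] := alpha_abs.
move=> HS SQ; have [l' [C' [D' EQ]]] := alpha_sym _ _ HS SQ.
case: HS SQ EQ => l [C [D ->]] SQ EQ; rewrite EQ in SQ *.
by have [_ [? _]] := alpha_sub _ _ _ _ _ _ SQ.
Qed.

Lemma abs_step_semC Q Q' : abs_step A alpha Q Q' -> subset_set (s_C Q') (s_C Q).
Proof.
case=> S [QS SQ'] v /(abstraction_semC (sym_step_is_sym QS) SQ').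
exact: sym_step_semC QS v.
Qed.

End InducedSystem.

Theorem lemma1 (P : finType) (n : nat) (L : finType)
  (A : PTBA P n L) (alpha : sstate P n L -> sstate P n L -> Prop) :
  wf_PTA (b_M A) ->
  abstraction A alpha ->
  forall s, abs_state alpha s ->
  forall s', clos_refl_trans _ (abs_step A alpha) s s' ->
  forall v, s_C s' v -> s_C s v.
Proof.
move=> _ alpha_abs s _ s'.
elim=> {s s'} [Q Q' QQ'|Q|Q1 Q2 Q3 _ IH12 _ IH23] v.
- exact: (abs_step_semC alpha_abs QQ').
- exact.
- by move/IH23/IH12.
Qed.
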